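(* Let $m\ge 3$. Call $\mathbf{x}=(x_1,\ldots,x_m)\in\mathbb{R}^m$ generic if the $\binom{m}{2}$ midpoints $(x_i+x_j)/2$, $1\le i<j\le m$, are pairwise distinct (in particular the $x_i$ are pairwise distinct). For such $\mathbf{x}$ define its ranking pattern $$\mathrm{RP}^{\mathrm{UF}}(\mathbf{x})=\{(i_1\cdots i_m)\in\mathbb{P}_m:\ |y-x_{i_1}|<\cdots<|y-x_{i_m}|\text{ for some }y\in\mathbb{R}\},$$ where $\mathbb{P}_m$ is the set of permutations $(i_1\cdots i_m)$ of $[m]=\{1,\ldots,m\}$. Two ranking patterns $\mathrm{RP}^{\mathrm{UF}}(\mathbf{x})$, $\mathrm{RP}^{\mathrm{UF}}(\mathbf{x}')$ are called equivalent if $\mathrm{RP}^{\mathrm{UF}}(\mathbf{x})=\{(\sigma(i_1)\cdots\sigma(i_m)):(i_1\cdots i_m)\in\mathrm{RP}^{\mathrm{UF}}(\mathbf{x}')\}$ for some bijection $\sigma:[m]\to[m]$. Let $r_{\mathrm{IE}}(m)$ be the number of equivalence classes of ranking patterns $\mathrm{RP}^{\mathrm{UF}}(\mathbf{x})$ with $\mathbf{x}\in\mathbb{R}^m$ generic, and let $r_0(m)$ be the number of distinct ranking patterns $\mathrm{RP}^{\mathrm{UF}}(\mathbf{x})$ with $\mathbf{x}$ generic and $x_1<\cdots<x_m$. Let $\mathcal{B}_m$ be the braid arrangement $\{\{x_i=x_j\}:1\le i<j\le m\}$ in $\mathbb{R}^m$ and $\mathcal{M}_m$ the mid-hyperplane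 arrangement consisting of the hyperplanes of $\mathcal{B}_m$ together with the hyperplanes $\{x_i+x_j=x_k+x_l\}$ for all $(i,j,k,l)$ with $i,j,k,l$ pairwise distinct, $1\le i<j\le m$, $i<k<l\le m$. Then $$r_{\mathrm{IE}}(m)=\begin{cases} r_0(3)=\dfrac{|\mathrm{ch}(\mathcal{B}_3)|}{3!}=1, & m=3,\\[2mm] \dfrac{r_0(m)}{2}=\dfrac{|\mathrm{ch}(\mathcal{M}_m)|}{2\cdot m!}, & m\ge 4,\end{cases}$$ where $\mathrm{ch}(\cdot)$ denotes the set of chambers (connected components of the complement of the union of the hyperplanes) of an arrangement. *)

From HB Require Import structures.
From mathcomp Require Import all_boot all_order all_algebra all_fingroup.
From mathcomp Require Import all_classical all_reals all_analysis.
Set Implicit Arguments. Unset Strict Implicit. Unset Printing Implicit Defensive.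
Import Order.TTheory GRing.Theory Num.Theory.
Import numFieldNormedType.Exports.
Local Open Scope ring_scope.

(* Indices [m] = {1..m} are represented by 'I_m = {0..m-1}.
   A point x in R^m is a row vector x : 'rV[R]_m, coordinate x_i = x ord0 i.
   A permutation (i_1 ... i_m) of [m] is s : 'S_m with s k = i_{k+1}. *)

Section Defs.
Variables (R : realType) (m : nat).

Definition generic (x : 'rV[R]_m) : Prop :=
  forall i j k l : 'I_m, (i < j)%N -> (k < l)%N -> (i, j) <> (k, l) ->
    (x ord0 i + x ord0 j) / 2 <> (x ord0 k + x ord0 l) / 2.

Definition RP (x : 'rV[R]_m) : {set 'S_m} :=
  [set s : 'S_m | `[< exists y : R, forall k k' : 'I_m, (k < k')%N ->
       `|y - x ord0 (s k)| < `|y - x ord0 (s k')| >]].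

(* relabelling by a bijection sigma : {(sigma(i_1)...sigma(i_m)) | (i_1...i_m) in P};
   note (s * sigma) k = sigma (s k) in MathComp *)
Definition relabel (sigma : 'S_m) (P : {set 'S_m}) : {set 'S_m} :=
  [set (s * sigma)%g | s in P].

Definition rp_equiv (P Q : {set 'S_m}) : bool :=
  [exists sigma : 'S_m, P == relabel sigma Q].

Definition RPs : {set {set 'S_m}} :=
  [set P : {set 'S_m} | `[< exists x : 'rV[R]_m, generic x /\ P = RP x >]].

Definition r_IE : nat :=
  #|[set [set Q in RPs | rp_equiv P Q] | P in RPs]|.

Definition r_0 : nat :=
  #|[set P : {set 'S_m} | `[< exists x : 'rV[R]_m, [/\ generic x,
        (forall i j : 'I_m, (i < j)%N -> x ord0 i < x ord0 j) & P = RP x] >]]|.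

End Defs.

Local Open Scope classical_set_scope.
Section Arr.
Variables (R : realType) (m : nat).

Definition hyp_eq (i j : 'I_m) : set 'rV[R]_m :=
  [set v | v ord0 i = v ord0 j].
Definition hyp_mid (i j k l : 'I_m) : set 'rV[R]_m :=
  [set v | v ord0 i + v ord0 j = v ord0 k + v ord0 l].

Definition braid_arr : set (set 'rV[R]_m) :=
  [set H | exists i j : 'I_m, (i < j)%N /\ H = hyp_eq i j].

Definition mid_arr : set (set 'rV[R]_m) :=
  braid_arr `|`
  [set H | exists i j k l : 'I_m,
      [/\ uniq [:: i; j; k; l], (i < j)%N, (i < k)%N, (k < l)%N
        & H = hyp_mid i j k l]].

Definition arr_complement (A : set (set 'rV[R]_m)) : set 'rV[R]_m :=
  ~` \bigcup_(H in A) H.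
Definition chambers (A : set (set 'rV[R]_m)) : set (set 'rV[R]_m) :=
  [set connected_component (arr_complement A) x | x in arr_complement A].

End Arr.

Arguments braid_arr : clear implicits.
Arguments mid_arr : clear implicits.
Arguments r_IE : clear implicits.
Arguments r_0 : clear implicits.
Arguments RPs : clear implicits.

From HB Require Import structures.
From mathcomp Require Import all_boot all_order all_algebra all_fingroup.
From mathcomp Require Import all_classical all_reals all_analysis.
From mathcomp Require Import ring lra zify.
Import Order.TTheory GRing.Theory Num.Theory.
Import numFieldNormedType.Exports.
Set Implicit Arguments. Unset Strict Implicit. Unset Printing Implicit Defensive.
Local Open Scope ring_scope.

(* Since |y - x_a| < |y - x_b| iff (x_b - x_a) (2y - x_a - x_b) < 0, a ranking records on
   which side of each pairwise sum x_a + x_b the point 2y lies.  So RP^UF(x) depends only on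
   the order of the pairwise sums of x, i.e. on its chamber in the mid-hyperplane arrangement;
   conversely, for increasing x and p < q, r < t, we have x_p + x_q < x_r + x_t iff some ranking
   puts q before p and r before t, so RP^UF(x) determines that order.  The complement of M_m
   (and of B_3) is the set of points with pairwise distinct pair sums, and its connected
   components are exactly the classes of equal sum order; a chamber is therefore a sorting
   permutation together with a pattern of an increasing point, which gives m! r_0(m) chambers.
   For increasing points, b lies between a and c iff no ranking puts b after both, so a
   relabelling between their patterns preserves betweenness and is the identity or the
   reversal.  The reversal is realised by x |-> (-x_m, ..., -x_1), which for m >= 4 reverses
   the order of x_1 + x_m and x_2 + x_(m-1): every class contains exactly two patterns of
   increasing points.  For m = 3 all increasing points have the same sum order. *)

Section Distance.
Variable R : realDomainType.

Lemma ltr_dist (y p q : R) :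
  (`|y - p| < `|y - q|) = ((q - p) * (2 * y - (p + q)) < 0).
Proof.
by case: (ger0P (y - p)) => h1; case: (ger0P (y - q)) => h2; apply/idP/idP; nra.
Qed.

Lemma eqr_dist (y p q : R) :
  (`|y - p| = `|y - q|) <-> ((q - p) * (2 * y - (p + q)) = 0).
Proof.
by case: (ger0P (y - p)) => h1; case: (ger0P (y - q)) => h2; split => H; nra.
Qed.

End Distance.

Section Separation.
Variable R : realFieldType.

Lemma exists_lt_seq (s : seq R) : exists c, forall b, b \in s -> c < b.
Proof.
elim: s => [|b s [c Hc]]; first by exists 0.
exists (Num.min c (b - 1)) => b'; rewrite inE => /orP[/eqP->|/Hc cb'].
  by rewrite gt_min; apply/orP; right; lra.
by rewrite gt_min cb'.
Qed.

Lemma exists_between_seq (c : R) (s : seq R) : (forall b, b \in s -> c < b) ->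
  exists2 z, c < z & forall b, b \in s -> z < b.
Proof.
elim: s => [|b s IH] H; first by exists (c + 1) => //; lra.
have cb : c < b by apply: H; rewrite inE eqxx.
have [z cz zs] : exists2 z, c < z & forall b, b \in s -> z < b.
  by apply: IH => b' hb; apply: H; rewrite inE hb orbT.
exists (Num.min z ((c + b) / 2)); first by rewrite lt_min cz /=; lra.
move=> b'; rewrite inE => /orP[/eqP->|/zs zb'].
  by rewrite gt_min; apply/orP; right; lra.
by rewrite gt_min zb'.
Qed.

Lemma separate_seq (sa sb : seq R) :
  (forall a b, a \in sa -> b \in sb -> a < b) ->
  exists z, (forall a, a \in sa -> a < z) /\ (forall b, b \in sb -> z < b).
Proof.
elim: sa => [|a sa IH] H.
  by have [c Hc] := exists_lt_seq sb; exists c.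
have [z [za zb]] : exists z, (forall a, a \in sa -> a < z) /\
    (forall b, b \in sb -> z < b).
  by apply: IH => a' b ha hb; apply: H => //; rewrite inE ha orbT.
have [|z' zz' z'b] := @exists_between_seq (Num.max z a) sb.
  by move=> b hb; rewrite gt_max zb //= H // inE eqxx.
exists z'; split => // a'; move: zz'; rewrite gt_max => /andP[zz' az'].
by rewrite inE => /orP[/eqP->|/za /lt_trans]; last apply.
Qed.

Lemma separate_fin (I J : finType) (A : pred I) (B : pred J) (f : I -> R) (g : J -> R) :
  (forall i j, A i -> B j -> f i < g j) ->
  exists z, (forall i, A i -> f i < z) /\ (forall j, B j -> z < g j).
Proof.
move=> H; have [|z [za zb]] :=
  @separate_seq [seq f i | i <- enum A] [seq g j | j <- enum B].
  by move=> a b /mapP[i + ->] /mapP[j + ->]; rewrite !mem_enum; apply: H.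
by exists z; split => [i Ai|j Bj]; [apply: za|apply: zb]; apply: map_f; rewrite mem_enum.
Qed.

End Separation.

Section Permutations.
Variable m : nat.
Implicit Types (s t : 'S_m) (i j k : 'I_m).

Definition rev_perm : 'S_m := perm (@rev_ord_inj m).

Lemma rev_permE i : rev_perm i = rev_ord i.
Proof. by rewrite permE. Qed.

Lemma rev_permK : (rev_perm * rev_perm = 1)%g.
Proof. by apply/permP => i; rewrite permM !rev_permE rev_ordK perm1. Qed.

Lemma rev_permV : (rev_perm^-1 = rev_perm)%g.
Proof. by rewrite -[LHS]mulg1 -rev_permK mulgA mulVg mul1g. Qed.

Lemma homo_ord_succ (f : 'I_m -> nat) :
  (forall i j, j = i.+1 :> nat -> (f i < f j)%N) -> {homo f : i j / (i < j)%N}.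
Proof.
move=> fS i j ij; pose g n := f (insubd i n).
have insubdK k : insubd i k = k by apply: val_inj; rewrite val_insubd ltn_ord.
have : {in [pred n | n < m]%N &, {homo g : a b / (a < b)%N}}.
  apply: homo_ltn_in => [a b c|a b|a /[!inE] am am1].
  - exact: ltn_trans.
  - by rewrite !inE => am bm c /andP[_ cb]; rewrite inE (ltn_trans cb).
  - by apply: fS; rewrite !val_insubd am am1.
by move/(_ i j (ltn_ord i) (ltn_ord j) ij); rewrite /g !insubdK.
Qed.

Lemma leq_homo_ord (f : 'I_m -> 'I_m) :
  {homo f : i j / (i < j)%N} -> forall i, (i <= f i)%N.
Proof.
move=> f_homo; suff H n i : nat_of_ord i = n -> (n <= f i)%N by move=> i; apply: H.
elim: n i => // n IH i ni.
have nm : (n < m)%N by rewrite (ltn_trans _ (ltn_ord i)) // ni.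
have := f_homo (Ordinal nm) i; rewrite ni /= ltnSn => /(_ isT).
exact/leq_ltn_trans/IH.
Qed.

Lemma homo_perm1 t : {homo t : i j / (i < j)%N} -> t = 1%g.
Proof.
move=> t_homo.
have tV_homo : {homo t^-1%g : i j / (i < j)%N}.
  move=> i j ij; case: ltngtP => // [/t_homo|/val_inj/(congr1 t)]; rewrite !permKV.
    by rewrite ltnNge (ltnW ij).
  by move=> eij; move: ij; rewrite eij ltnn.
apply/permP => i; apply/val_inj/eqP; rewrite perm1 eqn_leq (leq_homo_ord t_homo) andbT.
by have := leq_homo_ord tV_homo (t i); rewrite permK.
Qed.

Definition between (a b c : nat) := (a < b < c)%N || (c < b < a)%N.

Definition preserves_between t :=
  forall i j k, between i j k -> between (t i) (t j) (t k).

Lemma preserves_between_rev t :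
  preserves_between t -> preserves_between (t * rev_perm)%g.
Proof.
move=> t_btw i j k /t_btw; rewrite !permM !rev_permE /between /=.
by have := ltn_ord (t i); have := ltn_ord (t j); have := ltn_ord (t k); lia.
Qed.

Lemma preserves_between_homo t : preserves_between t ->
  (forall i j, i = 0 :> nat -> j = 1 :> nat -> (t i < t j)%N) ->
  {homo t : i j / (i < j)%N}.
Proof.
move=> t_btw t01; apply: homo_ord_succ.
suff: forall n i j, i = n :> nat -> j = n.+1 :> nat -> (t i < t j)%N.
  by move=> + i j; apply.
elim=> [|n IH] i j ni nj; first exact: t01.
have nm : (n < m)%N by rewrite (ltn_trans _ (ltn_ord i)) // ni.
have := IH (Ordinal nm) i erefl ni.
have := t_btw (Ordinal nm) i j; rewrite /between ni nj /= !ltnSn => /(_ isT).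
by move=> h1 h2; lia.
Qed.

Lemma preserves_between_perm t : (1 < m)%N -> preserves_between t ->
  t = 1%g \/ t = rev_perm.
Proof.
move=> m2 t_btw; pose i0 := Ordinal (ltn_trans (ltnSn 0) m2); pose i1 := Ordinal m2.
have homo01 u : (u i0 < u i1)%N ->
    forall i j, i = 0 :> nat -> j = 1 :> nat -> (u i < u j)%N.
  move=> u01 i j i_0 j_1; have -> : i = i0 by apply: val_inj.
  by have -> : j = i1 by apply: val_inj.
case: (ltngtP (t i0) (t i1)) => [t01|t10|/val_inj/perm_inj //].
  by left; apply/homo_perm1/preserves_between_homo/homo01.
right; rewrite -[t]mulg1 -rev_permK mulgA.
rewrite (homo_perm1 (preserves_between_homo (preserves_between_rev t_btw) _)) ?mul1g //.
apply: homo01; rewrite !permM !rev_permE /=.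
by have := ltn_ord (t i0); move: t10; lia.
Qed.

End Permutations.

Section Sorting.
Variables (R : realDomainType) (m : nat).

Lemma sorting_perm (f : 'I_m -> R) : injective f ->
  exists s : 'S_m, forall k k' : 'I_m, (k < k')%N -> f (s k) < f (s k').
Proof.
move=> f_inj; pose rk i := #|[set j | f j < f i]|.
have rk_lt i : (rk i < m)%N.
  have : [set j | f j < f i] \proper [set: 'I_m].
    by apply/properP; split => //; exists i; rewrite !inE ?ltxx.
  by move/proper_card; rewrite cardsT card_ord.
have rk_homo i j : f i < f j -> (rk i < rk j)%N.
  move=> fij; apply/proper_card/properP; split; last by exists i; rewrite !inE ?ltxx.
  by apply/fintype.subsetP => k; rewrite !inE => /lt_trans; apply.
pose r i := Ordinal (rk_lt i).
have r_homo i j : f i < f j -> (r i < r j)%N := rk_homo i j.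
have r_inj : injective r.
  move=> i j e; case: (ltgtP (f i) (f j)) => [/r_homo|/r_homo|/f_inj //].
    by rewrite e ltnn.
  by rewrite e ltnn.
exists (perm r_inj)^-1%g => k k' kk'.
have rK k0 : r ((perm r_inj)^-1%g k0) = k0 by rewrite -[r _]permE permKV.
case: ltgtP => // [/r_homo|/f_inj/(congr1 r)]; rewrite !rK.
  by rewrite ltnNge (ltnW kk').
by move=> e; move: kk'; rewrite e ltnn.
Qed.

Lemma sorting_perm_rank (s : 'S_m) (f : 'I_m -> R) :
  (forall k k' : 'I_m, (k < k')%N -> f (s k) < f (s k')) ->
  forall i j, ((s^-1)%g i < (s^-1)%g j)%N = (f i < f j).
Proof.
move=> s_sorts i j; rewrite -{2}(permKV s i) -{2}(permKV s j).
case: (ltngtP ((s^-1)%g i) ((s^-1)%g j)) => [/s_sorts -> //|/s_sorts|/val_inj-> //].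
by move/ltW; rewrite leNgt => /negbTE.
Qed.

End Sorting.

Section PairSums.
Variables (R : realType) (m : nat).
Implicit Types (x : 'rV[R]_m) (a b c d i j : 'I_m).

Definition pair_sum x a b := x ord0 a + x ord0 b.

Definition same_pair a b c d := ((a == c) && (b == d)) || ((a == d) && (b == c)).

Definition sum_generic x := forall a b c d, a != b -> c != d ->
  pair_sum x a b = pair_sum x c d -> same_pair a b c d.

Definition same_sum_order x x' := forall a b c d, a != b -> c != d ->
  (pair_sum x a b < pair_sum x c d) = (pair_sum x' a b < pair_sum x' c d).

Definition increasing x := forall i j, (i < j)%N -> x ord0 i < x ord0 j.

Lemma same_pair_sum x a b c d : same_pair a b c d -> pair_sum x a b = pair_sum x c d.
Proof.
by case/orP => /andP[/eqP-> /eqP->] //; rewrite /pair_sum addrC.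
Qed.

Lemma same_pair_trans a b c d p q :
  same_pair a b p q -> same_pair c d p q -> same_pair a b c d.
Proof.
by do 2!case/orP => /andP[/eqP-> /eqP->]; rewrite /same_pair !eqxx ?orbT.
Qed.

Lemma ordered_pair a b : a != b -> exists p q : 'I_m, (p < q)%N /\ same_pair a b p q.
Proof.
case: (ltngtP a b) => [ab|ba|/val_inj->]; last by rewrite eqxx.
- by exists a, b; rewrite /same_pair !eqxx.
- by exists b, a; rewrite /same_pair !eqxx orbT.
Qed.

Lemma sum_genericP x : generic x <-> sum_generic x.
Proof.
have half_eq i j k l : (x ord0 i + x ord0 j) / 2 = (x ord0 k + x ord0 l) / 2 ->
    pair_sum x i j = pair_sum x k l.
  by move/(mulIf _); apply; rewrite invr_eq0 pnatr_eq0.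
split=> [G a b c d ab cd e|G i j k l ij kl neq /half_eq e].
  have [p [q [pq abpq]]] := ordered_pair ab.
  have [r [t [rt cdrt]]] := ordered_pair cd.
  have [[epr eqt]|/eqP neq] := eqVneq (p, q) (r, t).
    by apply: (same_pair_trans abpq); rewrite epr eqt.
  exfalso; apply: (G p q r t pq rt neq); congr (_ / 2).
  by rewrite -[LHS]/(pair_sum x p q) -(same_pair_sum x abpq) e (same_pair_sum x cdrt).
have ij' : i != j by rewrite neq_ltn ij.
have kl' : k != l by rewrite neq_ltn kl.
case/orP: (G _ _ _ _ ij' kl' e) => /andP[/eqP ik /eqP jl]; first by rewrite ik jl in neq.
by move: ij kl; rewrite ik jl => /ltn_trans/[apply]; rewrite ltnn.
Qed.

Lemma exists_third a b : (3 <= m)%N -> exists c, (c != a) && (c != b).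
Proof.
move=> m3; have : (0 < #|~: [set a; b]|)%N.
  have := cardsC [set a; b]; rewrite card_ord cards2.
  by case: (a != b); move: m3; lia.
by case/card_gt0P => c; rewrite !inE negb_or; exists c.
Qed.

Lemma sum_generic_neq x a b : (3 <= m)%N -> sum_generic x -> a != b ->
  x ord0 a != x ord0 b.
Proof.
move=> m3 G ab; have [c /andP[ca cb]] := exists_third a b m3.
apply/eqP => e; have /(G _ _ _ _ ca cb) : pair_sum x c a = pair_sum x c b.
  by rewrite /pair_sum e.
by rewrite /same_pair eqxx (negbTE ab) (negbTE cb).
Qed.

Lemma sum_generic_pair_neq x a b c d : sum_generic x -> a != b -> c != d ->
  ~~ same_pair a b c d -> pair_sum x a b != pair_sum x c d.
Proof. by move=> G ab cd; apply: contraNneq; apply: G. Qed.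

Lemma same_sum_order_lt x x' a b : (3 <= m)%N -> same_sum_order x x' -> a != b ->
  (x ord0 a < x ord0 b) = (x' ord0 a < x' ord0 b).
Proof.
move=> m3 S ab; have [c /andP[ca cb]] := exists_third a b m3.
by have := S c a c b ca cb; rewrite /pair_sum !ltrD2l.
Qed.

Lemma same_sum_orderC x x' : same_sum_order x x' -> same_sum_order x' x.
Proof. by move=> S a b c d ab cd; rewrite S. Qed.

Lemma increasing_lt x i j : increasing x -> (x ord0 i < x ord0 j) = (i < j)%N.
Proof.
move=> I; apply/idP/idP => [|/I //].
by case: (ltngtP i j) => // [/I/lt_trans/[apply]|/val_inj->]; rewrite ltxx.
Qed.

End PairSums.

Section Rankings.
Variables (R : realType) (m : nat).
Implicit Types (x : 'rV[R]_m) (y : R) (s : 'S_m) (a b c i j k : 'I_m).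

Definition ranking_at x y s := forall k k' : 'I_m, (k < k')%N ->
  `|y - x ord0 (s k)| < `|y - x ord0 (s k')|.

Lemma RP_inP x s : s \in RP x <-> exists y, ranking_at x y s.
Proof. by rewrite inE; split => /asboolP. Qed.

Lemma ltr_dist_pair x y a b : (`|y - x ord0 a| < `|y - x ord0 b|) =
  ((x ord0 b - x ord0 a) * (2 * y - pair_sum x a b) < 0).
Proof. exact: ltr_dist. Qed.

Lemma ranking_at_rank x y s : ranking_at x y s -> forall a b,
  ((s^-1)%g a < (s^-1)%g b)%N = ((x ord0 b - x ord0 a) * (2 * y - pair_sum x a b) < 0).
Proof.
by move=> /(@sorting_perm_rank _ _ s (fun i => `|y - x ord0 i|)) rk a b; rewrite rk ltr_dist_pair.
Qed.

Lemma ranking_at_sum x y s : ranking_at x y s <-> forall k k' : 'I_m, (k < k')%N ->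
  (x ord0 (s k') - x ord0 (s k)) * (2 * y - pair_sum x (s k) (s k')) < 0.
Proof. by split=> H k k' kk'; have := H k k' kk'; rewrite ltr_dist_pair. Qed.

Definition never_farthest (P : {set 'S_m}) a b c := forall s, s \in P ->
  ~~ (((s^-1)%g a < (s^-1)%g b)%N && ((s^-1)%g c < (s^-1)%g b)%N).

Lemma between_never_farthest x a b c : increasing x -> between a b c ->
  never_farthest (RP x) a b c.
Proof.
move=> I + s /RP_inP[y /ranking_at_rank rk]; rewrite !rk /pair_sum.
wlog /andP[ab bc] : a c / (a < b < c)%N.
  move=> wl btw; case/orP: (btw) => [abc|cba]; first exact: wl.
  by rewrite andbC; apply: (wl _ _ cba); rewrite /between cba.
move=> _; have := I _ _ ab; have := I _ _ bc => xbc xab.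
rewrite pmulr_rlt0 ?subr_gt0 // nmulr_rlt0 ?subr_lt0 //.
by apply/negP => /andP[]; lra.
Qed.

Lemma ler_coord_sum_norm x i :
  - \sum_j `|x ord0 j| <= x ord0 i <= \sum_j `|x ord0 j|.
Proof. by rewrite -ler_norml (bigD1 i) //= lerDl sumr_ge0. Qed.

Lemma RP_increasing1 x : increasing x -> 1%g \in RP x.
Proof.
move=> I; apply/RP_inP; exists (- \sum_j `|x ord0 j| - 1) => k k' kk'.
have := ler_coord_sum_norm x k; have := ler_coord_sum_norm x k'; have := I _ _ kk'.
by move=> ? /andP[? ?] /andP[? ?]; rewrite !perm1 !ltr0_norm; lra.
Qed.

Lemma RP_increasing_rev x : increasing x -> rev_perm m \in RP x.
Proof.
move=> I; apply/RP_inP; exists (\sum_j `|x ord0 j| + 1) => k k' kk'.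
have : x ord0 (rev_ord k') < x ord0 (rev_ord k) by apply: I => /=; have := ltn_ord k'; lia.
have := ler_coord_sum_norm x (rev_ord k); have := ler_coord_sum_norm x (rev_ord k').
by move=> /andP[? ?] /andP[? ?] ?; rewrite !rev_permE !gtr0_norm; lra.
Qed.

Lemma never_farthest_between x a b c : increasing x -> a != b -> b != c ->
  never_farthest (RP x) a b c -> between a b c.
Proof.
move=> I ab bc nf; apply: contraT => not_btw.
have [[a_b c_b]|[b_a b_c]] : (a < b /\ c < b)%N \/ (b < a /\ b < c)%N.
- by move: not_btw ab bc; rewrite /between -!val_eqE /=; lia.
- by have := nf _ (RP_increasing1 I); rewrite invg1 !perm1 a_b c_b.
have := nf _ (RP_increasing_rev I); rewrite rev_permV !rev_permE /=.
by have := ltn_ord a; have := ltn_ord c; lia.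
Qed.

End Rankings.

Section GenericRankings.
Variables (R : realType) (m : nat).
Hypothesis m3 : (3 <= m)%N.
Implicit Types (x : 'rV[R]_m) (y : R) (s : 'S_m) (a b c i j k p q r t : 'I_m).

Lemma exists_ranking_at x y : sum_generic x ->
  (forall a b, a != b -> 2 * y != pair_sum x a b) -> exists s, ranking_at x y s.
Proof.
move=> G y_off; apply: (@sorting_perm _ _ (fun i => `|y - x ord0 i|)).
move=> a b /eqr_dist/eqP; apply: contraTeq => ab.
rewrite mulf_neq0 ?subr_eq0 ?y_off // eq_sym.
exact: sum_generic_neq.
Qed.

Lemma RP_same_sum_order x x' s : sum_generic x -> same_sum_order x x' ->
  s \in RP x -> s \in RP x'.
Proof.
move=> G S /RP_inP[y /ranking_at_sum y_rk]; apply/RP_inP.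
(* 2y separates the sums of the pairs ranked by [s] with the farther point on the left from
   those with it on the right; [S] transports this separation to [x']. *)
have s_neq k k' : (k < k')%N -> s k != s k' by rewrite (inj_eq perm_inj) neq_ltn => ->.
pose lo (e : 'I_m * 'I_m) := ((e.1 < e.2)%N && (x ord0 (s e.2) < x ord0 (s e.1))).
pose hi (e : 'I_m * 'I_m) := ((e.1 < e.2)%N && (x ord0 (s e.1) < x ord0 (s e.2))).
have lo_sum e : lo e -> pair_sum x (s e.1) (s e.2) < 2 * y.
  by case/andP => /y_rk + lt; rewrite nmulr_rlt0 ?subr_gt0 ?subr_lt0.
have hi_sum e : hi e -> 2 * y < pair_sum x (s e.1) (s e.2).
  by case/andP => /y_rk + lt; rewrite pmulr_rlt0 ?subr_gt0 ?subr_lt0.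
pose sum' (e : 'I_m * 'I_m) := pair_sum x' (s e.1) (s e.2).
have [z [z_lo z_hi]] : exists z,
    (forall e, lo e -> sum' e < z) /\ (forall e, hi e -> z < sum' e).
  apply: separate_fin => e e' lo_e hi_e.
  rewrite /sum' -S; first exact: lt_trans (lo_sum _ lo_e) (hi_sum _ hi_e).
    by case/andP: lo_e => /s_neq.
  by case/andP: hi_e => /s_neq.
exists (z / 2); apply/ranking_at_sum => k k' kk'.
have -> : 2 * (z / 2) = z by field.
have ltE := same_sum_order_lt m3 S (s_neq _ _ kk').
have ltE' : (x ord0 (s k') < x ord0 (s k)) = (x' ord0 (s k') < x' ord0 (s k)).
  by apply: same_sum_order_lt; rewrite // eq_sym s_neq.
case: (ltgtP (x ord0 (s k)) (x ord0 (s k'))) => [lt|gt|/eqP].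
- have := z_hi (k, k'); rewrite /hi /sum' /= kk' lt => /(_ isT) hi_z.
  by rewrite pmulr_rlt0 ?subr_lt0 // subr_gt0 -ltE.
- have := z_lo (k, k'); rewrite /lo /sum' /= kk' gt => /(_ isT) lo_z.
  by rewrite nmulr_rlt0 ?subr_gt0 // subr_lt0 -ltE'.
- by rewrite (negbTE (sum_generic_neq m3 G (s_neq _ _ kk'))).
Qed.

Lemma RP_eq_of_same_sum_order x x' : sum_generic x -> sum_generic x' ->
  same_sum_order x x' -> RP x = RP x'.
Proof.
move=> G G' S; apply/setP => s; apply/idP/idP; first exact: RP_same_sum_order.
by apply: RP_same_sum_order => //; apply: same_sum_orderC.
Qed.

Lemma lt_pair_sum_RP x p q r t : increasing x -> sum_generic x ->
  (p < q)%N -> (r < t)%N ->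
  (pair_sum x p q < pair_sum x r t) <-> exists2 s, s \in RP x &
    ((s^-1)%g q < (s^-1)%g p)%N && ((s^-1)%g r < (s^-1)%g t)%N.
Proof.
move=> I G pq rt.
have xqp : x ord0 q - x ord0 p > 0 by rewrite subr_gt0 I.
have xrt : x ord0 t - x ord0 r > 0 by rewrite subr_gt0 I.
have ranksE y s : ranking_at x y s ->
    ((s^-1)%g q < (s^-1)%g p)%N && ((s^-1)%g r < (s^-1)%g t)%N =
    (pair_sum x p q < 2 * y < pair_sum x r t).
  move=> /ranking_at_rank rk; rewrite !rk nmulr_rlt0 ?pmulr_rlt0 //; last first.
    by rewrite -opprB oppr_lt0.
  by rewrite subr_gt0 subr_lt0 /pair_sum addrC.
split=> [lt|[s /RP_inP[y /ranksE->] /andP[/lt_trans]]]; last exact.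
(* Take 2y strictly between the two sums and distinct from every pair sum. *)
pose A (e : 'I_m * 'I_m) := (e.1 != e.2) && (pair_sum x e.1 e.2 <= pair_sum x p q).
pose B (e : 'I_m * 'I_m) := (e.1 != e.2) && (pair_sum x p q < pair_sum x e.1 e.2).
have [z [z_A z_B]] : exists z, (forall e, A e -> pair_sum x e.1 e.2 < z) /\
    (forall e, B e -> z < pair_sum x e.1 e.2).
  by apply: separate_fin => e e' /andP[_ /le_lt_trans + ] /andP[_]; apply.
have z2 : 2 * (z / 2) = z by field.
have [s s_rk] : exists s, ranking_at x (z / 2) s.
  apply: exists_ranking_at => // a b ab; rewrite z2.
  case: (leP (pair_sum x a b) (pair_sum x p q)) => h.
    by rewrite gt_eqF // (z_A (a, b)) //= /A ab h.
  by rewrite lt_eqF // (z_B (a, b)) //= /B ab h.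
exists s; first by apply/RP_inP; exists (z / 2).
rewrite (ranksE _ _ s_rk) z2 (z_A (p, q)) ?(z_B (r, t)) //=.
  by rewrite /B lt neq_ltn rt.
by rewrite /A lexx neq_ltn pq.
Qed.

Lemma same_sum_order_of_RP x x' : increasing x -> sum_generic x ->
  increasing x' -> sum_generic x' -> RP x = RP x' -> same_sum_order x x'.
Proof.
move=> I G I' G' E a b c d ab cd.
have [p [q [pq abpq]]] := ordered_pair ab.
have [r [t [rt cdrt]]] := ordered_pair cd.
rewrite !(same_pair_sum _ abpq) !(same_pair_sum _ cdrt).
have := lt_pair_sum_RP I G pq rt; have := lt_pair_sum_RP I' G' pq rt.
by rewrite E => h' h; apply/idP/idP => [/h/h'|/h'/h].
Qed.

End GenericRankings.

Section Relabelling.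
Variables (R : realType) (m : nat).
Implicit Types (x : 'rV[R]_m) (p s : 'S_m) (P Q : {set 'S_m}).

Lemma relabel1 P : relabel 1%g P = P.
Proof. by rewrite /relabel (eq_imset _ (@mulg1 _)) imset_id. Qed.

Lemma relabelM p s P : relabel p (relabel s P) = relabel (s * p)%g P.
Proof. by rewrite /relabel -imset_comp; apply: eq_imset => t /=; rewrite mulgA. Qed.

Lemma rp_equivP P Q : reflect (exists p, P = relabel p Q) (rp_equiv P Q).
Proof. by apply: (iffP existsP) => [[p /eqP]|[p ->]]; exists p. Qed.

Lemma rp_equiv_refl P : rp_equiv P P.
Proof. by apply/rp_equivP; exists 1%g; rewrite relabel1. Qed.

Lemma rp_equiv_sym P Q : rp_equiv P Q -> rp_equiv Q P.
Proof.
by case/rp_equivP => p ->; apply/rp_equivP; exists p^-1%g; rewrite relabelM mulgV relabel1.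
Qed.

Lemma rp_equiv_trans P Q S : rp_equiv P Q -> rp_equiv Q S -> rp_equiv P S.
Proof.
move=> /rp_equivP[p ->] /rp_equivP[s ->].
by apply/rp_equivP; exists (s * p)%g; rewrite relabelM.
Qed.

Lemma never_farthest_relabel p P a b c :
  never_farthest (relabel p P) a b c ->
  never_farthest P ((p^-1)%g a) ((p^-1)%g b) ((p^-1)%g c).
Proof.
move=> nf s sP; have := nf (s * p)%g (imset_f (fun t => (t * p)%g) sP).
by rewrite invMg !permM.
Qed.

Definition permute_row x p : 'rV[R]_m := \row_j x ord0 (p j).

Definition reflect_row x : 'rV[R]_m := \row_j - x ord0 (rev_ord j).

Lemma permute_rowE x p j : permute_row x p ord0 j = x ord0 (p j).
Proof. by rewrite mxE. Qed.

Lemma reflect_rowE x j : reflect_row x ord0 j = - x ord0 (rev_ord j).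
Proof. by rewrite mxE. Qed.

Lemma permute_rowK x p : permute_row (permute_row x p) p^-1%g = x.
Proof. by apply/rowP => j; rewrite !permute_rowE permKV. Qed.

Lemma permute_rowKV x p : permute_row (permute_row x p^-1%g) p = x.
Proof. by apply/rowP => j; rewrite !permute_rowE permK. Qed.

Lemma RP_permute_row x p : RP x = relabel p (RP (permute_row x p)).
Proof.
apply/setP => s; apply/idP/imsetP => [/RP_inP[y y_rk]|[t /RP_inP[y y_rk] ->]].
  exists (s * p^-1)%g; last by rewrite -mulgA mulVg mulg1.
  by apply/RP_inP; exists y => k k' /y_rk; rewrite !permute_rowE -!permM -mulgA mulVg mulg1.
by apply/RP_inP; exists y => k k' /y_rk; rewrite !permM !permute_rowE.
Qed.

Lemma sum_generic_permute_row x p : sum_generic x -> sum_generic (permute_row x p).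
Proof.
move=> G a b c d ab cd; rewrite /pair_sum !permute_rowE => e.
by have := G (p a) (p b) (p c) (p d); rewrite /same_pair !(inj_eq perm_inj); apply.
Qed.

Lemma same_sum_order_permute_row x x' p :
  same_sum_order x x' -> same_sum_order (permute_row x p) (permute_row x' p).
Proof.
move=> S a b c d ab cd; rewrite /pair_sum !permute_rowE.
by apply: S; rewrite (inj_eq perm_inj).
Qed.

Lemma increasing_reflect_row x : increasing x -> increasing (reflect_row x).
Proof.
move=> I i j ij; rewrite !reflect_rowE ltrN2; apply: I => /=.
by have := ltn_ord j; lia.
Qed.

Lemma sum_generic_reflect_row x : sum_generic x -> sum_generic (reflect_row x).
Proof.
move=> G a b c d ab cd; rewrite /pair_sum !reflect_rowE -!opprD => /oppr_inj e.
have := G (rev_ord a) (rev_ord b) (rev_ord c) (rev_ord d).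
by rewrite /same_pair !(inj_eq rev_ord_inj); apply.
Qed.

Lemma RP_reflect_row x : RP (reflect_row x) = relabel (rev_perm m) (RP x).
Proof.
have distN (u v : R) : `|u - - v| = `|- u - v| by rewrite opprK -normrN opprD.
apply/setP => s; apply/idP/imsetP => [/RP_inP[y y_rk]|[t /RP_inP[y y_rk] ->]].
  exists (s * rev_perm m)%g; last by rewrite -mulgA rev_permK mulg1.
  apply/RP_inP; exists (- y) => k k' /y_rk.
  by rewrite !permM !rev_permE !reflect_rowE !distN.
apply/RP_inP; exists (- y) => k k' /y_rk.
by rewrite !reflect_rowE !permM !rev_permE !rev_ordK !distN opprK.
Qed.

End Relabelling.

Lemma convex_comb_lt0 (R : realFieldType) (u v t : R) : u < 0 -> v < 0 ->
  0 <= t <= 1 -> (1 - t) * u + t * v < 0.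
Proof.
move=> u0 v0 /andP[t0 t1]; have tu : (1 - t) * u <= 0 by apply: mulr_ge0_le0; lra.
case: (eqVneq t 0) => [-> |tn0]; first by rewrite subr0 mul1r mul0r addr0.
have : t * v < 0 by rewrite pmulr_rlt0 // lt0r tn0.
lra.
Qed.

Section Components.
Variables (R : realType) (m : nat).
Local Open Scope classical_set_scope.
Implicit Types (x : 'rV[R]_m).

Definition sum_generic_points : set 'rV[R]_m := [set x | sum_generic x].

Lemma segment_sum_generic x x' t : sum_generic x -> sum_generic x' ->
  same_sum_order x x' -> 0 <= t <= 1 -> sum_generic (x + t *: (x' - x)).
Proof.
move=> G G' S t01 a b c d ab cd.
case/boolP: (same_pair a b c d) => // not_same e; exfalso.
have comb x'' : pair_sum (x + t *: (x'' - x)) a b - pair_sum (x + t *: (x'' - x)) c d =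
    (1 - t) * (pair_sum x a b - pair_sum x c d) + t * (pair_sum x'' a b - pair_sum x'' c d).
  by rewrite /pair_sum !mxE; ring.
have := comb x'; rewrite e subrr.
set u := pair_sum x a b - _; set v := pair_sum x' a b - _.
have neg_uv : (u < 0) = (v < 0) by rewrite !subr_lt0 S.
have pos_uv : (0 < u) = (0 < v) by rewrite !subr_gt0 S.
have := sum_generic_pair_neq G ab cd not_same; rewrite -subr_eq0 -/u.
case: ltgtP => [u_lt0|u_gt0|//] _ /eqP.
  by rewrite eq_sym lt_eqF // convex_comb_lt0 // -neg_uv.
rewrite eq_sym -oppr_eq0 opprD -!mulrN lt_eqF // convex_comb_lt0 // oppr_lt0 //.
by rewrite -pos_uv.
Qed.

Lemma connected_same_sum_order x x' : sum_generic x -> sum_generic x' ->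
  same_sum_order x x' -> connected_component sum_generic_points x x'.
Proof.
move=> G G' S; pose g t : 'rV[R]_m := x + t *: (x' - x).
have g_cont : continuous g.
  by move=> t; apply: cvgD; [exact: cvg_cst|apply: cvgZr_tmp; exact: cvg_id].
apply: (connected_component_max (B := g @` `[0, 1])).
- by exists 0; [rewrite /= in_itv /= lexx ler01|rewrite /g scale0r addr0].
- move=> _ [t t01 <-]; rewrite /sum_generic_points /g /=; apply: (segment_sum_generic G G' S).
  by move: t01; rewrite /= in_itv.
- apply: connected_continuous_connected; first exact: segment_connected.
  exact: continuous_subspaceT.
- by exists 1; [rewrite /= in_itv /= lexx ler01|rewrite /g scale1r addrC subrK].
Qed.

Lemma same_sum_order_connected x x' : sum_generic x ->
  connected_component sum_generic_points x x' -> same_sum_order x x'.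
Proof.
move=> G xx' a b c d ab cd.
case/boolP: (same_pair a b c d) => [same|not_same].
  by rewrite !(same_pair_sum _ same) !ltxx.
pose C := connected_component sum_generic_points x.
pose phi (v : 'rV[R]_m) : R := pair_sum v a b - pair_sum v c d.
have phi_cont : continuous phi.
  have coord (i : 'I_m) : continuous (fun v : 'rV[R]_m => v ord0 i).
    exact: coord_continuous.
  move=> v; rewrite /phi /pair_sum.
  exact: continuousB (continuousD (coord a v) (coord b v)) (continuousD (coord c v) (coord d v)).
have phi_itv : is_interval (phi @` C).
  apply/connected_intervalP/connected_continuous_connected.
    exact: component_connected.
  exact: continuous_subspaceT.
have phi_neq0 v : C v -> phi v != 0.
  move=> /connected_component_sub Gv; rewrite subr_eq0.
  exact: sum_generic_pair_neq.
have no_sign_change v w : C v -> C w -> phi v < 0 -> 0 < phi w -> False.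
  move=> Cv Cw v_lt0 w_gt0.
  have [u Cu phi_u0] : (phi @` C) 0.
    by apply: (phi_itv (phi v) (phi w)); [exists v|exists w|rewrite !ltW].
  by have := phi_neq0 u Cu; rewrite phi_u0 eqxx.
have Cx : C x by apply: connected_component_refl.
rewrite -![_ < pair_sum _ c d]subr_lt0 -/(phi x) -/(phi x').
case: (ltP (phi x) 0); case: (ltP (phi x') 0) => // h' h; exfalso.
- by apply: (no_sign_change x x') => //; rewrite lt_def phi_neq0.
- by apply: (no_sign_change x' x) => //; rewrite lt_def phi_neq0.
Qed.

End Components.
Arguments sum_generic_points : clear implicits.

Section Arrangements.
Variables (R : realType) (m : nat).
Implicit Types (x : 'rV[R]_m) (a b c d i j k l p q r t u v w : 'I_m).

Lemma same_pair_perm_eq a b p q : same_pair a b p q -> perm_eq [:: a; b] [:: p; q].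
Proof. by case/orP => /andP[/eqP-> /eqP->]; rewrite ?perm_refl // (perm_catC [:: q]). Qed.

Lemma pair_sum_eq_uniq x a b c d : injective (fun i => x ord0 i) ->
  a != b -> c != d -> ~~ same_pair a b c d ->
  pair_sum x a b = pair_sum x c d -> uniq [:: a; b; c; d].
Proof.
move=> x_inj ab cd not_same e.
have cancel u v w : x ord0 u + x ord0 v = x ord0 u + x ord0 w -> v = w.
  by move/addrI/x_inj.
rewrite /= !inE !negb_or ab cd !andbT /=.
have ac : a != c.
  apply: contraNneq not_same => ac; move: e; rewrite /pair_sum ac => /cancel bd.
  by rewrite /same_pair bd !eqxx.
have ad : a != d.
  apply: contraNneq not_same => ad; move: e; rewrite /pair_sum ad [RHS]addrC => /cancel bc.
  by rewrite /same_pair bc !eqxx orbT.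
have bc : b != c.
  apply: contraNneq not_same => bc; move: e; rewrite /pair_sum bc [LHS]addrC => /cancel ad'.
  by rewrite /same_pair ad' !eqxx orbT.
have bd : b != d.
  apply: contraNneq not_same => bd; move: e.
  rewrite /pair_sum bd [LHS]addrC [RHS]addrC => /cancel ac'.
  by rewrite /same_pair ac' !eqxx.
by rewrite ac ad bc bd.
Qed.

Lemma sum_generic_of_mid x :
  (forall u v, (u < v)%N -> x ord0 u != x ord0 v) ->
  (forall i j k l, uniq [:: i; j; k; l] -> (i < j)%N -> (i < k)%N -> (k < l)%N ->
     pair_sum x i j != pair_sum x k l) -> sum_generic x.
Proof.
move=> x_neq mid_neq a b c d ab cd e.
case/boolP: (same_pair a b c d) => // not_same; exfalso.
have x_inj : injective (fun i => x ord0 i).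
  move=> u v /eqP; case: (ltngtP u v) => [/x_neq/negbTE->|/x_neq|/val_inj] //.
  by rewrite eq_sym => /negbTE->.
have [p [q [pq abpq]]] := ordered_pair ab.
have [r [t [rt cdrt]]] := ordered_pair cd.
have e' : pair_sum x p q = pair_sum x r t.
  by rewrite -(same_pair_sum x abpq) -(same_pair_sum x cdrt).
have pqrt : uniq [:: p; q; r; t].
  rewrite -(perm_uniq (perm_cat (same_pair_perm_eq abpq) (same_pair_perm_eq cdrt))).
  exact: pair_sum_eq_uniq e.
case: (ltngtP p r) => [pr|rp|/val_inj pr].
- by move: (mid_neq _ _ _ _ pqrt pq pr rt); rewrite e' eqxx.
- have rtpq : uniq [:: r; t; p; q] by rewrite (perm_uniq (permEl (perm_catC [:: r; t] [:: p; q]))).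
  by move: (mid_neq _ _ _ _ rtpq rt rp pq); rewrite e' eqxx.
- by move: pqrt; rewrite pr /= !inE eqxx orbT.
Qed.

Local Open Scope classical_set_scope.

Lemma sum_generic_off_braid x i j : (3 <= m)%N -> sum_generic x -> (i < j)%N ->
  ~ hyp_eq i j x.
Proof. by move=> m3 G ij; apply/eqP/sum_generic_neq; rewrite // neq_ltn ij. Qed.

Lemma arr_complement_mid : (3 <= m)%N ->
  arr_complement (mid_arr R m) = sum_generic_points R m.
Proof.
move=> m3; apply/seteqP; split => x.
  move=> x_off; apply: sum_generic_of_mid => [u v uv|i j k l ijkl ij ik kl];
    apply/eqP => e; apply: x_off.
    by exists (hyp_eq u v) => //; left; exists u, v.
  by exists (hyp_mid i j k l) => //; right; exists i, j, k, l.
move=> G [_ [[i [j [ij ->]]]|[i [j [k [l [ijkl ij ik kl ->]]]]]]].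
  exact: sum_generic_off_braid.
apply/eqP/(sum_generic_pair_neq G); rewrite ?neq_ltn ?ij ?kl //.
by move: ijkl; rewrite /same_pair /= !inE !negb_or => /and4P[/and3P[_ /negbTE-> /negbTE->]].
Qed.

End Arrangements.

Lemma arr_complement_braid3 (R : realType) :
  arr_complement (braid_arr R 3) = sum_generic_points R 3.
Proof.
apply/seteqP; split => x.
  move=> x_off; apply: sum_generic_of_mid => [u v uv|i j k l /card_uniqP four].
    by apply/eqP => e; apply: x_off; exists (hyp_eq u v) => //; exists u, v.
  by have := max_card (mem [:: i; j; k; l]); rewrite four card_ord.
by move=> G [_ [i [j [ij ->]]]]; apply: sum_generic_off_braid.
Qed.

Section SortedPatterns.
Variables (R : realType) (m : nat).
Hypothesis m3 : (3 <= m)%N.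
Implicit Types (x : 'rV[R]_m) (p : 'S_m) (P : {set 'S_m}).

Definition sorted_patterns : {set {set 'S_m}} :=
  [set P | `[< exists x : 'rV[R]_m, [/\ generic x,
      (forall i j : 'I_m, (i < j)%N -> x ord0 i < x ord0 j) & P = RP x] >]].

Lemma r_0E : r_0 R m = #|sorted_patterns|.
Proof. by []. Qed.

Lemma sorted_patternsP P :
  P \in sorted_patterns <-> exists x, [/\ sum_generic x, increasing x & P = RP x].
Proof.
rewrite inE; split => [/asboolP[x [/sum_genericP G I ->]]|[x [/sum_genericP G I ->]]].
  by exists x.
by apply/asboolP; exists x.
Qed.

Lemma RP_sorted_patterns x : sum_generic x -> increasing x -> RP x \in sorted_patterns.
Proof. by move=> G I; apply/sorted_patternsP; exists x. Qed.

Lemma sort_sum_generic x : sum_generic x ->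
  exists p, sum_generic (permute_row x p) /\ increasing (permute_row x p).
Proof.
move=> G; have [|p p_sorts] := @sorting_perm _ _ (fun i => x ord0 i).
  by move=> i j /eqP; apply: contraTeq => /(sum_generic_neq m3 G).
exists p; split; first exact: sum_generic_permute_row.
by move=> i j /p_sorts; rewrite !permute_rowE.
Qed.

Lemma sorting_perm_unique x x' p p' : same_sum_order x x' ->
  increasing (permute_row x p) -> increasing (permute_row x' p') -> p = p'.
Proof.
move=> S I I'; suff : (p * p'^-1)%g = 1%g.
  by move/(congr1 (mulg^~ p')); rewrite -mulgA mulVg mulg1 mul1g.
apply: homo_perm1 => j j' jj'.
rewrite -(increasing_lt _ _ I') !permute_rowE !permM !permKV.
rewrite -(same_sum_order_lt m3 S) ?(inj_eq perm_inj) ?neq_ltn ?jj' //.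
by have := I _ _ jj'; rewrite !permute_rowE.
Qed.

Local Open Scope classical_set_scope.

Section Representatives.
Variable rep : {set 'S_m} -> 'rV[R]_m.
Hypothesis repP : forall P, P \in sorted_patterns ->
  [/\ sum_generic (rep P), increasing (rep P) & P = RP (rep P)].

Definition chamber_point (u : 'S_m * 'I_#|sorted_patterns|) : 'rV[R]_m :=
  permute_row (rep (enum_val u.2)) u.1^-1%g.

Lemma chamber_point_generic u : sum_generic (chamber_point u).
Proof. by apply: sum_generic_permute_row; case: (repP (enum_valP u.2)). Qed.

Lemma chamber_point_inj :
  injective (fun u => connected_component (sum_generic_points R m) (chamber_point u)).
Proof.
move=> [p k] [p' k'] /= e.
have S : same_sum_order (chamber_point (p, k)) (chamber_point (p', k')).
  apply: same_sum_order_connected; first exact: chamber_point_generic.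
  by rewrite e; apply: connected_component_refl; apply: chamber_point_generic.
case: (repP (enum_valP k)) => G I E; case: (repP (enum_valP k')) => G' I' E'.
have pp' : p = p'.
  by apply: (sorting_perm_unique S); rewrite /chamber_point permute_rowKV.
subst p'; have := same_sum_order_permute_row p S.
rewrite /chamber_point !permute_rowKV /= => S'.
by congr (_, _); apply: enum_val_inj; rewrite E E'; apply: RP_eq_of_same_sum_order.
Qed.

Lemma chamber_point_onto :
  [set connected_component (sum_generic_points R m) x | x in sum_generic_points R m] =
  [set connected_component (sum_generic_points R m) (chamber_point u) | u in setT].
Proof.
apply/seteqP; split => _ [z Gz <-]; last first.
  by exists (chamber_point z); first exact: chamber_point_generic.
have [p [Gp Ip]] := sort_sum_generic Gz.
have Pp := RP_sorted_patterns Gp Ip.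
pose k := enum_rank_in Pp (RP (permute_row z p)).
exists (p, k) => //; apply: same_connected_component; apply: connected_component_sym.
apply: connected_same_sum_order => //; first exact: chamber_point_generic.
case: (repP (enum_valP k)) => G I E.
rewrite /chamber_point -[z](permute_rowK z p); apply: same_sum_order_permute_row.
by apply: same_sum_order_of_RP => //; rewrite -E enum_rankK_in.
Qed.

End Representatives.

Lemma chambers_card (A : set (set 'rV[R]_m)) :
  arr_complement A = sum_generic_points R m ->
  (chambers A #= `I_(r_0 R m * m`!))%card.
Proof.
move=> AE; rewrite /chambers AE r_0E.
have rep_ex P : exists x : 'rV[R]_m, P \in sorted_patterns ->
    [/\ sum_generic x, increasing x & P = RP x].
  case: (boolP (P \in sorted_patterns)) => [/sorted_patternsP[x x_rep]|_].
    by exists x.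
  by exists 0.
have [rep repP] := choice rep_ex.
pose T := ('S_m * 'I_#|sorted_patterns|)%type.
pose F (i : 'I_#|{: T}|) :=
  connected_component (sum_generic_points R m) (chamber_point rep (enum_val i)).
have F_inj : injective F by move=> i j /(chamber_point_inj repP)/enum_val_inj.
rewrite (chamber_point_onto repP).
have -> : [set connected_component (sum_generic_points R m) (chamber_point rep u) | u in setT]
    = F @` [set: 'I_#|{: T}|].
  apply/seteqP; split => _ [u _ <-]; last by exists (enum_val u).
  by exists (enum_rank u) => //; rewrite /F enum_rankK.
apply: (@card_eq_trans _ _ _ _ [set: 'I_#|{: T}|]).
  by apply: inj_card_eq => i j _ _; apply: F_inj.
rewrite card_prod card_Sn card_ord mulnC.
exact/card_esym/card_II.
Qed.

End SortedPatterns.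

Section PatternClasses.
Variables (R : realType) (m : nat).
Hypothesis m3 : (3 <= m)%N.
Implicit Types (x : 'rV[R]_m) (s : 'S_m) (P Q : {set 'S_m}).

Definition pattern_class P := [set Q in RPs R m | rp_equiv P Q].

Lemma RPsP P : P \in RPs R m <-> exists x, sum_generic x /\ P = RP x.
Proof.
rewrite inE; split => [/asboolP[x [/sum_genericP G ->]]|[x [/sum_genericP G ->]]].
  by exists x.
by apply/asboolP; exists x.
Qed.

Lemma sorted_patterns_RPs P : P \in sorted_patterns R m -> P \in RPs R m.
Proof. by case/sorted_patternsP => x [G _ ->]; apply/RPsP; exists x. Qed.

Lemma RPs_sorted_patterns P : P \in RPs R m ->
  exists2 Q, Q \in sorted_patterns R m & rp_equiv P Q.
Proof.
case/RPsP => x [G ->]; have [p [Gp Ip]] := sort_sum_generic m3 G.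
exists (RP (permute_row x p)); first exact: RP_sorted_patterns.
by apply/rp_equivP; exists p; apply: RP_permute_row.
Qed.

Lemma pattern_class_eq P Q : rp_equiv P Q -> pattern_class P = pattern_class Q.
Proof.
move=> PQ; apply/setP => S; rewrite !inE; congr (_ && _); apply/idP/idP.
  exact/rp_equiv_trans/rp_equiv_sym.
exact: rp_equiv_trans.
Qed.

Lemma pattern_classes_sorted :
  [set pattern_class P | P in RPs R m] = [set pattern_class P | P in sorted_patterns R m].
Proof.
apply/setP => C; apply/imsetP/imsetP => [[P /RPs_sorted_patterns[Q QS PQ] ->]|[P PS ->]].
  by exists Q => //; apply: pattern_class_eq.
by exists P => //; apply: sorted_patterns_RPs.
Qed.

Lemma relabel_increasing_perm x x' s : increasing x -> increasing x' ->
  RP x' = relabel s (RP x) -> s = 1%g \/ s = rev_perm m.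
Proof.
move=> I I' E.
have : preserves_between s^-1%g.
  move=> a b c abc.
  have ab : a != b by move: abc; rewrite /between -val_eqE /=; lia.
  have bc : b != c by move: abc; rewrite /between -val_eqE /=; lia.
  apply: (never_farthest_between I); rewrite ?(inj_eq perm_inj) //.
  by apply: never_farthest_relabel; rewrite -E; apply: between_never_farthest.
case/(preserves_between_perm (ltnW m3)) => sV; [left|right].
  by rewrite -[s]invgK sV invg1.
by rewrite -[s]invgK sV rev_permV.
Qed.

End PatternClasses.

Arguments pattern_class R {m}.

Section FourPoints.
Variables (R : realType) (m : nat).
Hypothesis m4 : (4 <= m)%N.
Implicit Types (x : 'rV[R]_m).

(* The reflection fixes the pairs {0, m-1} and {1, m-2} but reverses the order of their sums. *)
Lemma RP_reflect_row_neq x : increasing x -> sum_generic x -> RP x != RP (reflect_row x).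
Proof.
move=> I G; apply/eqP => E.
have S := same_sum_order_of_RP (ltnW m4) I G (increasing_reflect_row I)
  (sum_generic_reflect_row G) E.
have m0 : (0 < m)%N by apply: leq_trans m4.
have m1 : (1 < m)%N by apply: leq_trans m4.
have m2 : (m.-2 < m)%N by move: m4; lia.
have m3 : (m.-1 < m)%N by move: m4; lia.
pose i0 := Ordinal m0; pose i1 := Ordinal m1; pose i2 := Ordinal m2; pose i3 := Ordinal m3.
have [r0 r1 r2 r3] : [/\ rev_ord i0 = i3, rev_ord i1 = i2, rev_ord i2 = i1 & rev_ord i3 = i0].
  by split; apply: val_inj => /=; move: m4; lia.
have n03 : i0 != i3 by rewrite -val_eqE /=; move: m4; lia.
have n12 : i1 != i2 by rewrite -val_eqE /=; move: m4; lia.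
have not_same : ~~ same_pair i0 i3 i1 i2 by rewrite /same_pair -!val_eqE /=; move: m4; lia.
have := S i0 i3 i1 i2 n03 n12.
rewrite /pair_sum !reflect_rowE r0 r1 r2 r3 -!opprD ltrN2 [x ord0 i3 + _]addrC [x ord0 i2 + _]addrC.
by have := sum_generic_pair_neq G n03 n12 not_same; rewrite /pair_sum; case: ltgtP.
Qed.

Lemma sorted_pattern_class x : increasing x -> sum_generic x ->
  [set P in sorted_patterns R m | pattern_class R P == pattern_class R (RP x)] =
  [set RP x; RP (reflect_row x)].
Proof.
move=> I G; have m3 := ltnW m4.
have xr_equiv : rp_equiv (RP (reflect_row x)) (RP x).
  by apply/rp_equivP; exists (rev_perm m); apply: RP_reflect_row.
apply/setP => P; apply/setIdP/set2P => [[/sorted_patternsP[x' [G' I' ->]] /eqP cl]|[]->].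
- have : RP x \in pattern_class R (RP x').
    by rewrite cl inE rp_equiv_refl andbT; apply/RPsP; exists x.
  rewrite inE => /andP[_ /rp_equivP[s Es]].
  case: (relabel_increasing_perm m3 I I' Es) => s_id; rewrite Es s_id.
    by rewrite relabel1; left.
  by rewrite -RP_reflect_row; right.
- by split; [exact: RP_sorted_patterns|exact: eqxx].
- split; last by rewrite (pattern_class_eq R xr_equiv).
  by apply: RP_sorted_patterns; [apply: sum_generic_reflect_row|apply: increasing_reflect_row].
Qed.

Lemma r_IE_double : (2 * r_IE R m)%N = r_0 R m.
Proof.
have m3 := ltnW m4.
have -> : r_IE R m = #|[set pattern_class R P | P in RPs R m]| by [].
rewrite pattern_classes_sorted //.
rewrite r_0E -[#|sorted_patterns R m|]sum1_card (partition_big_imset (pattern_class R)) /=.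
rewrite (eq_bigr (fun _ => 2%N)) ?sum_nat_const 1?mulnC //.
move=> _ /imsetP[_ /sorted_patternsP[x [G I ->]] ->].
by rewrite sum1dep_card (sorted_pattern_class I G) cards2 RP_reflect_row_neq.
Qed.

End FourPoints.

Section ThreePoints.
Variable R : realType.
Implicit Types (x : 'rV[R]_3) (p q r t : 'I_3).

Definition iota_row : 'rV[R]_3 := \row_i (nat_of_ord i)%:R.

Lemma iota_rowE i : iota_row ord0 i = (nat_of_ord i)%:R.
Proof. by rewrite mxE. Qed.

Lemma increasing_iota_row : increasing iota_row.
Proof. by move=> i j ij; rewrite !iota_rowE ltr_nat. Qed.

Lemma sum_generic_iota_row : sum_generic iota_row.
Proof.
move=> a b c d; rewrite /pair_sum !iota_rowE -!natrD => ab cd /eqP.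
rewrite eqr_nat /same_pair -!val_eqE /=.
by move: ab cd; rewrite -!val_eqE /=; have := ltn_ord a; have := ltn_ord b;
  have := ltn_ord c; have := ltn_ord d; lia.
Qed.

(* Two pairs of indices in 'I_3 always share an index. *)
Lemma lt_pair_sum3 x p q r t : increasing x -> (p < q)%N -> (r < t)%N ->
  (pair_sum x p q < pair_sum x r t) = (p + q < r + t)%N.
Proof.
move=> I pq rt; have : [|| p == r, q == t, q == r | p == t].
  by move: pq rt; rewrite -!val_eqE /=; have := ltn_ord q; have := ltn_ord t; lia.
rewrite /pair_sum; case/or4P => /eqP e; subst.
- by rewrite ltrD2l increasing_lt // ltn_add2l.
- by rewrite ltrD2r increasing_lt // ltn_add2r.
- by rewrite [x ord0 p + _]addrC ltrD2l increasing_lt //; apply/idP/idP; lia.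
- by rewrite [x ord0 r + _]addrC ltrD2l increasing_lt //; apply/idP/idP; lia.
Qed.

Lemma same_sum_order3 x x' : increasing x -> increasing x' -> same_sum_order x x'.
Proof.
move=> I I' a b c d ab cd.
have [p [q [pq abpq]]] := ordered_pair ab.
have [r [t [rt cdrt]]] := ordered_pair cd.
by rewrite !(same_pair_sum _ abpq) !(same_pair_sum _ cdrt) !lt_pair_sum3.
Qed.

Lemma sorted_patterns3 : sorted_patterns R 3 = [set RP iota_row].
Proof.
apply/setP => P; rewrite finset.in_set1; apply/idP/eqP => [/sorted_patternsP[x [G I ->]]|->].
  apply: RP_eq_of_same_sum_order sum_generic_iota_row _ => //.
  exact: same_sum_order3 increasing_iota_row.
exact: RP_sorted_patterns sum_generic_iota_row increasing_iota_row.
Qed.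

Lemma r_0_3 : r_0 R 3 = 1%N.
Proof. by rewrite r_0E sorted_patterns3 cards1. Qed.

Lemma r_IE_3 : r_IE R 3 = 1%N.
Proof.
have -> : r_IE R 3 = #|[set pattern_class R P | P in RPs R 3]| by [].
by rewrite pattern_classes_sorted // sorted_patterns3 imset_set1 cards1.
Qed.

End ThreePoints.

Local Open Scope classical_set_scope.
Local Open Scope card_scope.

Theorem theorem3p3 (R : realType) :
  (r_IE R 3 = r_0 R 3 /\ r_0 R 3 = 1%N /\ chambers (braid_arr R 3) #= `I_(3`! * 1)) /\
  (forall m : nat, (4 <= m)%N ->
     (2 * r_IE R m = r_0 R m)%N /\ chambers (mid_arr R m) #= `I_(r_0 R m * m`!)).
Proof.
split.
  split; first by rewrite r_IE_3 r_0_3.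
  split; first exact: r_0_3.
  have := chambers_card (isT : (3 <= 3)%N) (arr_complement_braid3 R).
  by rewrite r_0_3 mul1n muln1.
move=> m m4; split; first exact: r_IE_double.
apply: (chambers_card (ltnW m4)); exact: arr_complement_mid (ltnW m4).
Qed.
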